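(* Let $T$ be a complete theory with monster model $\mathcal{U}$, $A\subseteq B$ small subsets of $\mathcal{U}$, $\mu\in\mathfrak{M}_x(\mathcal{U})$, $\nu\in\mathfrak{M}_y(\mathcal{U})$. If $\mu\geq_{\mathbb{E},A}\nu$, then $\mu\geq_{\mathbb{E},B}\nu$.
   Context: For $C\subseteq\mathcal{U}$, $\mathcal{L}_x(C)$ is the Boolean algebra of formulas in $x$ with parameters from $C$ modulo $T$, embedded in $\mathcal{L}_{xy}(C)$ via $\varphi(x)\mapsto\varphi(x)\wedge y=y$; $\mathfrak{M}_x(C)$ is the set of finitely additive probability measures on $\mathcal{L}_x(C)$. For $\omega\in\mathfrak{M}_{xy}(C)$, $\pi_x(\omega)(\varphi(x))=\omega(\varphi(x)\wedge y=y)$ (similarly $\pi_y$); $\omega|_D$ is restriction. $\mu\geq_{\mathbb{E},A}\nu$ means there is $\lambda\in\mathfrak{M}_{xy}(A)$ with $\pi_x(\lambda)=\mu|_A$ such that every $\omega\in\mathfrak{M}_{xy}(\mathcal{U})$ with $\omega|_A=\lambda$ and $\pi_x(\omega)=\mu$ satisfies $\pi_y(\omega)=\nu$. *)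

From Stdlib Require Import Reals List Bool Arith.
Import ListNotations.

Set Implicit Arguments.

(** Function/relation symbols are interpreted on
    lists of elements; only lists of the correct arity are ever used, since
    all formulas considered are well-formed (arity-correct). *)
Record signature : Type := {
  funs : Type; fun_ar : funs -> nat;
  rels : Type; rel_ar : rels -> nat }.

Record structure (L : signature) : Type := {
  dom :> Type;
  dom_inhabited : inhabited dom;
  fun_i : funs L -> list dom -> dom;
  rel_i : rels L -> list dom -> Prop }.

Inductive term (L : signature) (M : Type) : Type :=
| tvar : nat -> term L M
| tpar : M -> term L M
| tapp : funs L -> list (term L M) -> term L M.

Inductive form (L : signature) (M : Type) : Type :=
| frel : rels L -> list (term L M) -> form L M
| feq : term L M -> term L M -> form L M
| fbot : form L M
| fneg : form L M -> form L M
| fand : form L M -> form L M -> form L M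
| for_ : form L M -> form L M -> form L M
| fall : nat -> form L M -> form L M
| fex : nat -> form L M -> form L M.

Arguments tvar {L M}. Arguments tpar {L M}. Arguments tapp {L M}.
Arguments frel {L M}. Arguments feq {L M}. Arguments fbot {L M}.
Arguments fneg {L M}. Arguments fand {L M}. Arguments for_ {L M}.
Arguments fall {L M}. Arguments fex {L M}.

Section Syntax.
Variables (L : signature) (M : Type).

Fixpoint twf (t : term L M) : bool :=
  match t with
  | tapp f ts => (length ts =? fun_ar L f) && forallb twf ts
  | _ => true
  end.

Fixpoint fwf (p : form L M) : bool :=
  match p with
  | frel r ts => (length ts =? rel_ar L r) && forallb twf ts
  | feq t1 t2 => twf t1 && twf t2
  | fbot => true
  | fneg q => fwf q
  | fand q1 q2 | for_ q1 q2 => fwf q1 && fwf q2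
  | fall _ q | fex _ q => fwf q
  end.

Fixpoint tvars_in (V : nat -> bool) (t : term L M) : bool :=
  match t with
  | tvar k => V k
  | tpar _ => true
  | tapp _ ts => forallb (tvars_in V) ts
  end.

Fixpoint fvars_in (V : nat -> bool) (p : form L M) : bool :=
  match p with
  | frel _ ts => forallb (tvars_in V) ts
  | feq t1 t2 => tvars_in V t1 && tvars_in V t2
  | fbot => true
  | fneg q => fvars_in V q
  | fand q1 q2 | for_ q1 q2 => fvars_in V q1 && fvars_in V q2
  | fall k q | fex k q => fvars_in (fun j => V j || (j =? k)) q
  end.

Fixpoint tparams (t : term L M) : list M :=
  match t with
  | tvar _ => []
  | tpar a => [a]
  | tapp _ ts => flat_map tparams ts
  end.

Fixpoint fparams (p : form L M) : list M :=
  match p with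
  | frel _ ts => flat_map tparams ts
  | feq t1 t2 => tparams t1 ++ tparams t2
  | fbot => []
  | fneg q => fparams q
  | fand q1 q2 | for_ q1 q2 => fparams q1 ++ fparams q2
  | fall _ q | fex _ q => fparams q
  end.

Variable M' : Type.
Variable g : M -> M'.

Fixpoint tmap (t : term L M) : term L M' :=
  match t with
  | tvar k => tvar k
  | tpar a => tpar (g a)
  | tapp f ts => tapp f (map tmap ts)
  end.

Fixpoint fmap (p : form L M) : form L M' :=
  match p with
  | frel r ts => frel r (map tmap ts)
  | feq t1 t2 => feq (tmap t1) (tmap t2)
  | fbot => fbot
  | fneg q => fneg (fmap q)
  | fand q1 q2 => fand (fmap q1) (fmap q2)
  | for_ q1 q2 => for_ (fmap q1) (fmap q2)
  | fall k q => fall k (fmap q)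
  | fex k q => fex k (fmap q)
  end.
End Syntax.

Section Semantics.
Variables (L : signature) (S : structure L).

Definition upd (v : nat -> S) (k : nat) (a : S) : nat -> S :=
  fun j => if j =? k then a else v j.

Fixpoint teval (v : nat -> S) (t : term L S) : S :=
  match t with
  | tvar k => v k
  | tpar a => a
  | tapp f ts => fun_i S f (map (teval v) ts)
  end.

Fixpoint sat (v : nat -> S) (p : form L S) : Prop :=
  match p with
  | frel r ts => rel_i S r (map (teval v) ts)
  | feq t1 t2 => teval v t1 = teval v t2
  | fbot => False
  | fneg q => ~ sat v q
  | fand q1 q2 => sat v q1 /\ sat v q2
  | for_ q1 q2 => sat v q1 \/ sat v q2
  | fall k q => forall a, sat (upd v k a) q
  | fex k q => exists a, sat (upd v k a) q
  end.

(** Equivalence modulo T (= Th(U) with parameters): equivalence in S. *)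
Definition equivS (p q : form L S) : Prop := forall v, sat v p <-> sat v q.

Definition ftop : form L S := fneg fbot.

Definition LF (V : nat -> bool) (C : S -> Prop) (p : form L S) : Prop :=
  fwf p = true /\ fvars_in V p = true /\ (forall a, In a (fparams p) -> C a).

(** A finitely additive probability measure on the Boolean algebra L_V(C)
    (formulas modulo equivalence), represented by a function on formulas
    whose values outside L_V(C) are irrelevant. *)
Definition is_measure (V : nat -> bool) (C : S -> Prop) (mu : form L S -> R) : Prop :=
  (forall p q, LF V C p -> LF V C q -> equivS p q -> mu p = mu q) /\
  (forall p, LF V C p -> (0 <= mu p)%R) /\
  mu ftop = 1%R /\
  (forall p q, LF V C p -> LF V C q -> equivS (fand p q) fbot ->
     mu (for_ p q) = (mu p + mu q)%R).

Definition agree (V : nat -> bool) (C : S -> Prop) (mu nu : form L S -> R) : Prop :=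
  forall p, LF V C p -> mu p = nu p.

Definition setT : S -> Prop := fun _ => True.

(** variables: x = (x_0,...,x_{n-1}), y = (x_n,...,x_{n+m-1}) *)
Definition xv (n : nat) : nat -> bool := fun k => k <? n.
Definition yv (n m : nat) : nat -> bool := fun k => (n <=? k) && (k <? n + m).
Definition xyv (n m : nat) : nat -> bool := fun k => k <? n + m.

Definition eq_self (l : list nat) : form L S :=
  fold_right (fun k p => fand (feq (tvar k) (tvar k)) p) ftop l.

Definition proj_x (n m : nat) (om : form L S -> R) : form L S -> R :=
  fun p => om (fand p (eq_self (seq n m))).
Definition proj_y (n m : nat) (om : form L S -> R) : form L S -> R :=
  fun p => om (fand (eq_self (seq 0 n)) p).

Definition geE (n m : nat) (A : S -> Prop) (mu nu : form L S -> R) : Prop :=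
  exists lam : form L S -> R,
    is_measure (xyv n m) A lam /\
    agree (xv n) A (proj_x n m lam) mu /\
    forall om : form L S -> R,
      is_measure (xyv n m) setT om ->
      agree (xyv n m) A om lam ->
      agree (xv n) setT (proj_x n m om) mu ->
      agree (yv n m) setT (proj_y n m om) nu.
End Semantics.

(** Monster models: kappa is given as (the cardinality of) a type K. *)
Definition card_lt (X : Type) (C : X -> Prop) (K : Type) : Prop :=
  (exists f : X -> K, forall a b, C a -> C b -> f a = f b -> a = b) /\
  ~ (exists h : K -> X, (forall k, C (h k)) /\ (forall k k', h k = h k' -> k = k')).

Section Monster.
Variables (L : signature) (S : structure L) (K : Type).

Definition small (C : S -> Prop) : Prop := card_lt C K.

(* |L| + aleph_0 < kappa *)
Definition lang_small : Prop :=
  card_lt (fun _ : (funs L + rels L + nat)%type => True) K.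

Definition saturated : Prop :=
  forall C : S -> Prop, small C ->
  forall P : form L S -> Prop,
    (forall p, P p -> @LF L S (fun k => k =? 0) C p) ->
    (forall l : list (form L S), (forall p, In p l -> P p) ->
        exists v : nat -> S, forall p, In p l -> @sat L S v p) ->
    exists v : nat -> S, forall p, P p -> @sat L S v p.

Definition automorphism (s : S -> S) : Prop :=
  (exists s' : S -> S, (forall a, s' (s a) = a) /\ (forall a, s (s' a) = a)) /\
  (forall f (l : list S), length l = fun_ar L f -> s (fun_i S f l) = fun_i S f (map s l)) /\
  (forall r (l : list S), length l = rel_ar L r -> (rel_i S r l <-> rel_i S r (map s l))).

Definition elementary_on (C : S -> Prop) (f : S -> S) : Prop :=
  forall p : form L S, fwf p = true -> fvars_in (fun _ => false) p = true ->
    (forall a, In a (fparams p) -> C a) ->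
    forall v : nat -> S, @sat L S v p <-> @sat L S v (fmap f p).

Definition homogeneous : Prop :=
  forall (C : S -> Prop) (f : S -> S), small C -> elementary_on C f ->
    exists s, automorphism s /\ forall a, C a -> s a = f a.

Definition monster : Prop := lang_small /\ saturated /\ homogeneous.
End Monster.

From Stdlib Require Import Reals List Bool Arith Lra Lia.
From Stdlib Require Import Classical ClassicalEpsilon FunctionalExtensionality.
From mathcomp Require all_boot all_order all_algebra all_classical all_reals.
From mathcomp Require topology normedtype Rstruct Rstruct_topology.
Import ListNotations.
Open Scope R_scope.

(* If lambda witnesses mu >=_{E,A} nu
   and omega0 in M_xy(U) extends lambda and has x-marginal mu, then omega0 itself
   witnesses mu >=_{E,B} nu: every omega agreeing with omega0 on L_xy(B) agrees
   with lambda on L_xy(A).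
   Such an omega0 exists.  Given finitely many phi_i in L_xy(A) and psi_j in
   L_x(U), let a, e and b range over the atoms of the phi_i, of the
   L_x(A)-algebra generated by the formulas (exists y) a, and of the psi_j.
   Since e decides (exists y) a, the formula e /\ a /\ b is consistent as soon as
   e /\ a and e /\ b are, so the mass lambda(e /\ a) mu(e /\ b) / mu(e) can be
   put on a realisation of each e /\ a /\ b; the resulting finitely supported
   measure agrees with lambda on the phi_i and with mu on the psi_j.  A cluster
   point of these measures in the compact cube [0,1]^formulas is omega0. *)

Definition sumR (l : list R) : R := fold_right Rplus 0 l.

Lemma sumR_app l1 l2 : sumR (l1 ++ l2) = sumR l1 + sumR l2.
Proof. induction l1 as [|x l1 IH]; simpl; [lra|]. unfold sumR in *; simpl. rewrite IH. lra. Qed.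

Lemma sumR_ext {X} (f g : X -> R) l :
  (forall x, In x l -> f x = g x) -> sumR (map f l) = sumR (map g l).
Proof. intros H. f_equal. apply map_ext_in. auto. Qed.

Lemma sumR_scal_l {X} (c : R) (f : X -> R) l :
  sumR (map (fun x => c * f x) l) = c * sumR (map f l).
Proof. induction l as [|x l IH]; simpl; [lra|]. unfold sumR in *; simpl. rewrite IH. lra. Qed.

Lemma sumR_scal_r {X} (c : R) (f : X -> R) l :
  sumR (map (fun x => f x * c) l) = sumR (map f l) * c.
Proof. induction l as [|x l IH]; simpl; [lra|]. unfold sumR in *; simpl. rewrite IH. lra. Qed.

Lemma sumR_add {X} (f g : X -> R) l :
  sumR (map (fun x => f x + g x) l) = sumR (map f l) + sumR (map g l).
Proof. induction l as [|x l IH]; simpl; [lra|]. unfold sumR in *; simpl. rewrite IH. lra. Qed.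

Lemma sumR_le {X} (f g : X -> R) l :
  (forall x, In x l -> f x <= g x) -> sumR (map f l) <= sumR (map g l).
Proof.
  induction l as [|x l IH]; simpl; intros H; unfold sumR in *; simpl; [lra|].
  specialize (IH (fun y Hy => H y (or_intror Hy))). specialize (H x (or_introl eq_refl)). lra.
Qed.

Lemma sumR_nonneg {X} (f : X -> R) l : (forall x, In x l -> 0 <= f x) -> 0 <= sumR (map f l).
Proof.
  induction l as [|x l IH]; simpl; intros H; unfold sumR in *; simpl; [lra|].
  specialize (IH (fun y Hy => H y (or_intror Hy))). specialize (H x (or_introl eq_refl)). lra.
Qed.

Lemma sumR_flat_map {X Y} (h : Y -> R) (k : X -> list Y) l :
  sumR (map h (flat_map k l)) = sumR (map (fun x => sumR (map h (k x))) l).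
Proof. induction l as [|x l IH]; simpl; auto. rewrite map_app, sumR_app, IH. reflexivity. Qed.

Lemma Rinv_nonneg x : 0 <= x -> 0 <= / x.
Proof.
  intros H. destruct (Req_dec x 0) as [->|Hx0]; [rewrite Rinv_0; lra|].
  apply Rlt_le, Rinv_0_lt_compat; lra.
Qed.

(* At [z = 0] the junk value [/ 0 = 0] is harmless, since then [a = 0]. *)
Lemma Rinv_cancel_dominated a z : 0 <= a -> a <= z -> a * / z * z = a.
Proof. intros. destruct (Req_dec z 0) as [->|Hz0]; [rewrite Rinv_0; lra|]. field; auto. Qed.

Definition filter_prop {X} (P : X -> Prop) (l : list X) : list X :=
  filter (fun x => if excluded_middle_informative (P x) then true else false) l.

Lemma in_filter_prop {X} (P : X -> Prop) l x : In x (filter_prop P l) <-> In x l /\ P x.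
Proof.
  unfold filter_prop. rewrite filter_In.
  destruct (excluded_middle_informative (P x)); intuition congruence.
Qed.

Definition cluster_point {I X : Type} (f : I -> X -> R) (good : X -> I -> Prop) (g : X -> R) :=
  forall (l : list X) (eps : R), 0 < eps ->
    exists i, forall x, In x l -> good x i /\ Rabs (f i x - g x) < eps.

Section ClusterPoint.
Variables (I X : Type) (f : I -> X -> R) (good : X -> I -> Prop) (g : X -> R).
Hypothesis Hg : cluster_point f good g.

Lemma cluster_point_eventually x l c :
  (forall i, (forall y, In y l -> good y i) -> f i x = c) -> g x = c.
Proof.
  intros H. apply cond_eq. intros eps Heps. destruct (Hg (x :: l) eps Heps) as [i Hi].
  rewrite <- (H i) by (intros y Hy; apply Hi; right; exact Hy).
  rewrite Rabs_minus_sym. apply Hi. left. reflexivity.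
Qed.

Lemma cluster_point_ext x y : (forall i, f i x = f i y) -> g x = g y.
Proof.
  intros H. apply cond_eq. intros eps Heps.
  destruct (Hg [x; y] (eps / 2)) as [i Hi]; [lra|].
  destruct (Hi x) as [_ Hx%Rabs_def2]; [simpl; auto|].
  destruct (Hi y) as [_ Hy%Rabs_def2]; [simpl; auto|].
  rewrite H in Hx. apply Rabs_def1; lra.
Qed.

Lemma cluster_point_add x y z : (forall i, f i z = f i x + f i y) -> g z = g x + g y.
Proof.
  intros H. apply cond_eq. intros eps Heps.
  destruct (Hg [x; y; z] (eps / 3)) as [i Hi]; [lra|].
  destruct (Hi x) as [_ Hx%Rabs_def2]; [simpl; auto|].
  destruct (Hi y) as [_ Hy%Rabs_def2]; [simpl; auto|].
  destruct (Hi z) as [_ Hz%Rabs_def2]; [simpl; auto|].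
  rewrite H in Hz. apply Rabs_def1; lra.
Qed.

Lemma cluster_point_nonneg x : (forall i, 0 <= f i x) -> 0 <= g x.
Proof.
  intros H. apply Rle_plus_epsilon. intros eps Heps.
  destruct (Hg [x] eps Heps) as [i Hi].
  destruct (Hi x) as [_ Hx%Rabs_def2]; [simpl; auto|].
  specialize (H i). lra.
Qed.
End ClusterPoint.

Module CompactUnitCube.
Import all_boot all_order all_algebra all_classical all_reals.
Import topology normedtype Rstruct Rstruct_topology Num.Theory.
Local Open Scope classical_set_scope.

Lemma ultra_fmap {I : Type} {G : set_system I} (h : I -> R) :
  UltraFilter G -> UltraFilter (h @ G).
Proof.
move=> UG; split; first exact: fmap_proper_filter.
move=> H PH sub; rewrite predeqE => A; split; last exact: sub.
move=> HA; have [//|GnA] := in_ultra_setVsetC (h @^-1` A) UG.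
have HnA : H (~` A) by apply: sub.
exfalso; apply: (filter_not_empty H); rewrite -(setICr A); exact: filterI.
Qed.

(* The cluster point is the coordinatewise limit along an ultrafilter refining
   the filter generated by the sets [{i | good x i for all x in l}]. *)
Lemma cluster_point_exists {I X : Type} (f : I -> X -> R) (good : X -> I -> Prop) :
  (forall i x, Rle 0 (f i x) /\ Rle (f i x) 1) ->
  (forall l : list X, exists i, forall x, In x l -> good x i) ->
  exists g, cluster_point f good g.
Proof.
move=> f01 directed.
pose F : set_system I :=
  fun E => exists l, forall i, (forall x, In x l -> good x i) -> E i.
have FF : ProperFilter F.
  split.
    by move=> [l Hl]; have [i Hi] := directed l; exact: Hl i Hi.
  split.
  - by exists nil.
  - move=> E1 E2 [l1 H1] [l2 H2]; exists (l1 ++ l2) => i Hi.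
    by split; [apply: H1 | apply: H2] => x Hx; apply: Hi; apply: in_or_app; tauto.
  - by move=> E1 E2 sE [l Hl]; exists l => i /Hl /sE.
have [G [UG FG]] := ultraFilterLemma FF.
have /all_sig[g Hg] : forall x, {y : R | (fun i => f i x) @ G --> y}.
  move=> x; apply: cid.
  have cpt01 : compact (`[0%R, 1%R] : set R) by exact: segment_compact.
  move: cpt01; rewrite compact_ultra => /(_ _ (ultra_fmap (fun i => f i x) UG)).
  case; last by move=> y [_ Hy]; exists y.
  apply: FG; exists nil => i _ /=; rewrite in_itv /=.
  by have [/RleP -> /RleP ->] := f01 i x.
exists g => l eps /RltP eps0.
suff: G (fun i => forall x, In x l -> good x i /\ Rabs (f i x - g x) < eps).
  by move=> /filter_ex[i Hi]; exists i.
elim: l => [|x l IH]; first by apply: filterE => i x [].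
have Ggood : G (good x) by apply: FG; exists (x :: nil) => i; apply; left.
have Gclose : \forall i \near G, (`|g x - f i x| < eps)%R.
  by apply: (@cvgr_dist_lt R R^o); [exact: Hg | exact: eps0].
apply: filterS (filterI IH (filterI Ggood Gclose)).
move=> i [Hl [Hgood Hclose]] y [<-|Hy]; last exact: Hl.
by split => //; apply/RltP; rewrite RabsE distrC.
Qed.
End CompactUnitCube.

Section Formulas.
Variables (L : signature) (U : structure L).
Notation S := (dom U).
Notation F := (form L (dom U)).

Lemma term_ind_list (P : term L S -> Prop) :
  (forall k, P (tvar k)) -> (forall a, P (tpar a)) ->
  (forall f ts, Forall P ts -> P (tapp f ts)) -> forall t, P t.
Proof.
  intros Hvar Hpar Happ. fix IH 1. intros [k|a|f ts].
  - apply Hvar.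
  - apply Hpar.
  - apply Happ. induction ts as [|t ts IHts]; constructor; [apply IH | exact IHts].
Qed.

Lemma tvars_in_mono (V V' : nat -> bool) (t : term L S) :
  (forall k, V k = true -> V' k = true) -> tvars_in V t = true -> tvars_in V' t = true.
Proof.
  intros HV. induction t as [k|a|f ts IH] using term_ind_list; simpl; auto.
  rewrite Forall_forall in IH. rewrite !forallb_forall. intros Hts t Ht. auto.
Qed.

Lemma fvars_in_mono (p : F) : forall (V V' : nat -> bool),
  (forall k, V k = true -> V' k = true) -> fvars_in V p = true -> fvars_in V' p = true.
Proof.
  induction p; simpl; intros V V' HV Hp; auto.
  - rewrite forallb_forall in *. intros t Ht. eapply tvars_in_mono; eauto.
  - apply andb_true_iff in Hp as [H1 H2].
    now rewrite (tvars_in_mono _ _ _ HV H1), (tvars_in_mono _ _ _ HV H2).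
  - eauto.
  - apply andb_true_iff in Hp as [H1 H2]. now rewrite (IHp1 _ _ HV H1), (IHp2 _ _ HV H2).
  - apply andb_true_iff in Hp as [H1 H2]. now rewrite (IHp1 _ _ HV H1), (IHp2 _ _ HV H2).
  - eapply IHp; [|exact Hp]. intros k. rewrite !orb_true_iff. intuition.
  - eapply IHp; [|exact Hp]. intros k. rewrite !orb_true_iff. intuition.
Qed.

Lemma teval_agree (V : nat -> bool) (v w : nat -> S) (t : term L S) :
  (forall k, V k = true -> v k = w k) -> tvars_in V t = true -> teval U v t = teval U w t.
Proof.
  intros HV. induction t as [k|a|f ts IH] using term_ind_list; simpl; auto.
  rewrite Forall_forall in IH. rewrite forallb_forall. intros Hts.
  f_equal. apply map_ext_in. auto.
Qed.

Lemma upd_agree (V : nat -> bool) (v w : nat -> S) k a :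
  (forall j, V j = true -> v j = w j) ->
  forall j, (V j || (j =? k)) = true -> upd U v k a j = upd U w k a j.
Proof.
  intros HV j Hj. unfold upd. destruct (j =? k) eqn:E; auto.
  apply orb_true_iff in Hj as [Hj|Hj]; [auto|congruence].
Qed.

Lemma sat_agree (p : F) : forall (V : nat -> bool) (v w : nat -> S),
  (forall k, V k = true -> v k = w k) -> fvars_in V p = true -> (sat U v p <-> sat U w p).
Proof.
  induction p; simpl; intros V v w HV Hp.
  - rewrite forallb_forall in Hp.
    rewrite (map_ext_in _ (teval U w) l) by (intros t Ht; eapply teval_agree; eauto).
    tauto.
  - apply andb_true_iff in Hp as [H1 H2].
    rewrite (teval_agree _ _ _ _ HV H1), (teval_agree _ _ _ _ HV H2). tauto.
  - tauto.
  - rewrite (IHp _ _ _ HV Hp). tauto.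
  - apply andb_true_iff in Hp as [H1 H2]. rewrite (IHp1 _ _ _ HV H1), (IHp2 _ _ _ HV H2). tauto.
  - apply andb_true_iff in Hp as [H1 H2]. rewrite (IHp1 _ _ _ HV H1), (IHp2 _ _ _ HV H2). tauto.
  - pose proof (fun a => IHp _ _ _ (upd_agree _ _ _ n a HV) Hp) as IH.
    split; intros H a; apply (IH a), H.
  - pose proof (fun a => IHp _ _ _ (upd_agree _ _ _ n a HV) Hp) as IH.
    split; intros [a H]; exists a; apply (IH a), H.
Qed.

Definition fexs (ks : list nat) (p : F) : F := fold_right (fun k q => fex k q) p ks.

Lemma sat_fexs (ks : list nat) (p : F) (v : nat -> S) :
  sat U v (fexs ks p) <-> exists w, (forall k, ~ In k ks -> w k = v k) /\ sat U w p.
Proof.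
  revert v. induction ks as [|k ks IH]; simpl; intros v.
  - split; [intros H; exists v; auto|].
    intros [w [Hw H]]. replace v with w; auto. apply functional_extensionality. auto.
  - split.
    + intros [a [w [Hw Hs]]%IH]. exists w. split; auto.
      intros j Hj. rewrite Hw by tauto. unfold upd.
      destruct (Nat.eqb_spec j k); [subst; tauto|reflexivity].
    + intros [w [Hw Hs]]. exists (w k). apply IH. exists w. split; auto.
      intros j Hj. unfold upd. destruct (Nat.eqb_spec j k); [subst; reflexivity|].
      apply Hw. intros [H|H]; auto.
Qed.

Lemma fvars_in_fexs (ks : list nat) : forall (V : nat -> bool) (p : F),
  fvars_in (fun j => V j || existsb (Nat.eqb j) ks) p = true -> fvars_in V (fexs ks p) = true.
Proof.
  induction ks as [|k ks IH]; simpl; intros V p H.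
  - eapply fvars_in_mono; [|exact H]. intros j Hj. simpl in Hj. rewrite orb_false_r in Hj. exact Hj.
  - apply IH. eapply fvars_in_mono; [|exact H]. intros j Hj.
    rewrite !orb_true_iff in *. tauto.
Qed.

Lemma fwf_fexs ks (p : F) : fwf (fexs ks p) = fwf p.
Proof. induction ks; simpl; auto. Qed.

Lemma fparams_fexs ks (p : F) : fparams (fexs ks p) = fparams p.
Proof. induction ks; simpl; auto. Qed.

Lemma sat_eq_self (l : list nat) v : sat U v (eq_self U l).
Proof. induction l; simpl; auto. Qed.

Lemma fvars_in_eq_self (V : nat -> bool) (l : list nat) :
  (forall k, In k l -> V k = true) -> fvars_in V (eq_self U l) = true.
Proof. induction l as [|k l IH]; simpl; intros H; auto. rewrite H by auto. simpl. auto. Qed.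

Lemma fwf_eq_self l : fwf (eq_self U l) = true.
Proof. induction l; simpl; auto. Qed.

Lemma fparams_eq_self l : fparams (eq_self U l) = [].
Proof. induction l; simpl; auto. Qed.

Section LFClosure.
Variables (V : nat -> bool) (C : S -> Prop).

Lemma LF_and p q : LF U V C p -> LF U V C q -> LF U V C (fand p q).
Proof.
  intros [Hp1 [Hp2 Hp3]] [Hq1 [Hq2 Hq3]]. repeat split; simpl.
  - now rewrite Hp1, Hq1.
  - now rewrite Hp2, Hq2.
  - intros a [Ha|Ha]%in_app_or; auto.
Qed.

Lemma LF_or p q : LF U V C p -> LF U V C q -> LF U V C (for_ p q).
Proof.
  intros [Hp1 [Hp2 Hp3]] [Hq1 [Hq2 Hq3]]. repeat split; simpl.
  - now rewrite Hp1, Hq1.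
  - now rewrite Hp2, Hq2.
  - intros a [Ha|Ha]%in_app_or; auto.
Qed.

Lemma LF_neg p : LF U V C p -> LF U V C (fneg p).
Proof. intros [H1 [H2 H3]]. repeat split; auto. Qed.

Lemma LF_bot : LF U V C fbot.
Proof. repeat split. intros a []. Qed.

Lemma LF_top : LF U V C (ftop U).
Proof. repeat split. intros a []. Qed.
End LFClosure.

Lemma LF_mono (V V' : nat -> bool) (C C' : S -> Prop) p :
  (forall k, V k = true -> V' k = true) -> (forall a, C a -> C' a) ->
  LF U V C p -> LF U V' C' p.
Proof. intros HV HC [H1 [H2 H3]]. repeat split; auto. eapply fvars_in_mono; eauto. Qed.

Lemma LF_setT V (C : S -> Prop) p : LF U V C p -> LF U V (setT U) p.
Proof. apply LF_mono; auto. intros; exact I. Qed.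

Fixpoint atoms (l : list F) : list F :=
  match l with
  | [] => [ftop U]
  | p :: l => map (fand p) (atoms l) ++ map (fand (fneg p)) (atoms l)
  end.

Lemma atoms_LF V C l : (forall p, In p l -> LF U V C p) -> forall a, In a (atoms l) -> LF U V C a.
Proof.
  induction l as [|p l IH]; simpl; intros H a Ha.
  - destruct Ha as [<-|[]]. apply LF_top.
  - apply in_app_or in Ha as [Ha|Ha]; apply in_map_iff in Ha as [b [<- Hb]];
      repeat apply LF_and; auto using LF_neg.
Qed.

Lemma atoms_decide l : forall a, In a (atoms l) -> forall p, In p l ->
  (forall v, sat U v a -> sat U v p) \/ (forall v, sat U v a -> ~ sat U v p).
Proof.
  induction l as [|q l IH]; simpl; intros a Ha p Hp; [destruct Hp|].
  apply in_app_or in Ha as [Ha|Ha]; apply in_map_iff in Ha as [b [<- Hb]];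
    (destruct Hp as [<-|Hp]; [simpl; tauto|]);
    (destruct (IH b Hb p Hp) as [H|H]; [left|right]; simpl; intros v [_ Hv]; auto).
Qed.

Section MeasureFacts.
Variables (V : nat -> bool) (C : S -> Prop) (mu : F -> R).
Hypothesis Hmu : is_measure U V C mu.

Lemma measure_ext p q : LF U V C p -> LF U V C q -> (forall v, sat U v p <-> sat U v q) ->
  mu p = mu q.
Proof. destruct Hmu as [H _]. auto. Qed.

Lemma measure_nonneg p : LF U V C p -> 0 <= mu p.
Proof. destruct Hmu as [_ [H _]]. auto. Qed.

Lemma measure_top : mu (ftop U) = 1.
Proof. destruct Hmu as [_ [_ [H _]]]. auto. Qed.

Lemma measure_add p q : LF U V C p -> LF U V C q -> (forall v, ~ (sat U v p /\ sat U v q)) ->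
  mu (for_ p q) = mu p + mu q.
Proof. destruct Hmu as [_ [_ [_ H]]]. intros. apply H; auto. intros v; simpl. firstorder. Qed.

Lemma measure_bot : mu fbot = 0.
Proof.
  assert (E : mu (for_ fbot fbot) = mu fbot + mu fbot)
    by (apply measure_add; [apply LF_bot..|simpl; tauto]).
  assert (E' : mu (for_ fbot fbot) = mu fbot)
    by (apply measure_ext; [apply LF_or; apply LF_bot|apply LF_bot|simpl; tauto]).
  lra.
Qed.

Lemma measure_unsat p : LF U V C p -> (forall v, ~ sat U v p) -> mu p = 0.
Proof.
  intros Hp H. rewrite <- measure_bot. apply measure_ext; auto using LF_bot. simpl. firstorder.
Qed.

Lemma measure_split p q : LF U V C p -> LF U V C q -> mu p = mu (fand p q) + mu (fand p (fneg q)).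
Proof.
  intros Hp Hq. rewrite <- measure_add; auto using LF_and, LF_neg.
  - apply measure_ext; auto using LF_or, LF_and, LF_neg. intros v; simpl. tauto.
  - intros v; simpl. tauto.
Qed.

Lemma measure_mono p q : LF U V C p -> LF U V C q -> (forall v, sat U v p -> sat U v q) ->
  mu p <= mu q.
Proof.
  intros Hp Hq H. rewrite (measure_split q p Hq Hp).
  assert (E : mu (fand q p) = mu p)
    by (apply measure_ext; auto using LF_and; intros v; simpl; firstorder).
  assert (0 <= mu (fand q (fneg p))) by auto using measure_nonneg, LF_and, LF_neg.
  lra.
Qed.

Lemma measure_atoms l : (forall p, In p l -> LF U V C p) -> forall th, LF U V C th ->
  mu th = sumR (map (fun a => mu (fand th a)) (atoms l)).
Proof.
  induction l as [|p l IH]; simpl; intros Hl th Hth.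
  - unfold sumR; simpl. rewrite Rplus_0_r.
    apply measure_ext; auto using LF_and, LF_top. intros v; simpl; tauto.
  - assert (Hl' : forall q, In q l -> LF U V C q) by auto.
    assert (Hp : LF U V C p) by auto.
    rewrite (measure_split th p Hth Hp), map_app, sumR_app, !map_map.
    rewrite (IH Hl' (fand th p)), (IH Hl' (fand th (fneg p))) by auto using LF_and, LF_neg.
    f_equal; apply sumR_ext; intros a Ha;
      apply measure_ext; eauto using LF_and, LF_neg, atoms_LF; intros v; simpl; tauto.
Qed.
End MeasureFacts.

Lemma is_measure_restrict V (C : S -> Prop) om : is_measure U V (setT U) om -> is_measure U V C om.
Proof.
  intros [H1 [H2 [H3 H4]]]. repeat split; auto.
  - intros p q Hp Hq. apply H1; eapply LF_setT; eauto.
  - intros p Hp. apply H2; eapply LF_setT; eauto.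
  - intros p q Hp Hq. apply H4; eapply LF_setT; eauto.
Qed.

Definition indicator (p : F) (v : nat -> S) : R :=
  if excluded_middle_informative (sat U v p) then 1 else 0.

Lemma indicator_1 p v : sat U v p -> indicator p v = 1.
Proof. intros H. unfold indicator. destruct (excluded_middle_informative (sat U v p)); tauto. Qed.

Lemma indicator_0 p v : ~ sat U v p -> indicator p v = 0.
Proof. intros H. unfold indicator. destruct (excluded_middle_informative (sat U v p)); tauto. Qed.

Lemma indicator_bounds p v : 0 <= indicator p v <= 1.
Proof. unfold indicator. destruct (excluded_middle_informative (sat U v p)); lra. Qed.

Lemma witness_ex (p : F) : exists v : nat -> S, (exists w, sat U w p) -> sat U v p.
Proof.
  destruct (classic (exists w, sat U w p)) as [[w Hw]|H]; [exists w; auto|].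
  destruct (dom_inhabited U) as [s]. exists (fun _ => s). intros; contradiction.
Qed.

Definition witness (p : F) : nat -> S :=
  proj1_sig (constructive_indefinite_description _ (witness_ex p)).

Lemma sat_witness p : (exists w, sat U w p) -> sat U (witness p) p.
Proof. unfold witness. destruct (constructive_indefinite_description _ (witness_ex p)); auto. Qed.

Definition mixture (D : list (R * (nat -> S))) (p : F) : R :=
  sumR (map (fun wv => fst wv * indicator p (snd wv)) D).

Section Mixture.
Variable D : list (R * (nat -> S)).
Hypothesis HD : forall wv, In wv D -> 0 <= fst wv.

Lemma mixture_ext p q : (forall v, sat U v p <-> sat U v q) -> mixture D p = mixture D q.
Proof.
  intros H. apply sumR_ext. intros [w v] _. simpl. f_equal.
  destruct (classic (sat U v p)) as [Hp|Hp].
  - rewrite !indicator_1; auto. apply H; auto.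
  - rewrite !indicator_0; auto. rewrite <- H; auto.
Qed.

Lemma mixture_add p q : (forall v, ~ (sat U v p /\ sat U v q)) ->
  mixture D (for_ p q) = mixture D p + mixture D q.
Proof.
  intros H. unfold mixture. rewrite <- sumR_add. apply sumR_ext. intros [w v] _. simpl.
  destruct (classic (sat U v p)) as [Hp|Hp]; destruct (classic (sat U v q)) as [Hq|Hq].
  - exfalso; apply (H v); auto.
  - rewrite (indicator_1 (for_ p q)), (indicator_1 p), (indicator_0 q); simpl; auto. ring.
  - rewrite (indicator_1 (for_ p q)), (indicator_0 p), (indicator_1 q); simpl; auto. ring.
  - rewrite (indicator_0 (for_ p q)), (indicator_0 p), (indicator_0 q); simpl; auto. ring. tauto.
Qed.

Lemma mixture_nonneg p : 0 <= mixture D p.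
Proof.
  apply sumR_nonneg. intros [w v] Hwv. apply HD in Hwv. simpl in *.
  destruct (indicator_bounds p v). apply Rmult_le_pos; auto.
Qed.

Lemma mixture_le_top p : mixture D p <= mixture D (ftop U).
Proof.
  apply sumR_le. intros [w v] Hwv. apply HD in Hwv. simpl in *.
  rewrite (indicator_1 (ftop U)) by (simpl; auto). destruct (indicator_bounds p v).
  rewrite Rmult_1_r. rewrite <- (Rmult_1_r w) at 2. apply Rmult_le_compat_l; auto.
Qed.
End Mixture.

Variables (n m : nat).

Definition eq_self_y : F := eq_self U (seq n m).
Definition exists_y (p : F) : F := fexs (seq n m) p.

Lemma LF_x_xy (C : S -> Prop) p : LF U (xv n) C p -> LF U (xyv n m) C p.
Proof.
  apply LF_mono; auto. unfold xv, xyv. intros k Hk%Nat.ltb_lt. apply Nat.ltb_lt. lia.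
Qed.

Lemma LF_eq_self_y (C : S -> Prop) : LF U (xyv n m) C eq_self_y.
Proof.
  repeat split.
  - apply fwf_eq_self.
  - apply fvars_in_eq_self. intros k Hk%in_seq. apply Nat.ltb_lt. lia.
  - unfold eq_self_y. rewrite fparams_eq_self. intros a [].
Qed.

Lemma LF_exists_y (C : S -> Prop) p : LF U (xyv n m) C p -> LF U (xv n) C (exists_y p).
Proof.
  intros [H1 [H2 H3]]. unfold exists_y. repeat split.
  - rewrite fwf_fexs; auto.
  - apply fvars_in_fexs. eapply fvars_in_mono; [|exact H2].
    intros k Hk%Nat.ltb_lt. apply orb_true_iff. unfold xv.
    destruct (Nat.ltb_spec k n); [left; auto|right].
    apply existsb_exists. exists k. split; [apply in_seq; lia|apply Nat.eqb_refl].
  - rewrite fparams_fexs. auto.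
Qed.

Lemma sat_exists_y_intro p v : sat U v p -> sat U v (exists_y p).
Proof. intros H. apply sat_fexs. exists v. auto. Qed.

Lemma sat_exists_y_elim p v : sat U v (exists_y p) ->
  exists w, (forall k, (k < n)%nat -> w k = v k) /\ sat U w p.
Proof.
  intros [w [Hw Hs]]%sat_fexs. exists w. split; auto.
  intros k Hk. apply Hw. intros Hin%in_seq. lia.
Qed.

Lemma sat_x_agree (C : S -> Prop) p v w : LF U (xv n) C p ->
  (forall k, (k < n)%nat -> v k = w k) -> (sat U v p <-> sat U w p).
Proof.
  intros [_ [H _]] Hk. apply (sat_agree p (xv n)); auto.
  intros k Hk'%Nat.ltb_lt. auto.
Qed.

Section FiniteAmalgam.
Variables (A : S -> Prop) (lam mu : F -> R).
Hypothesis Hlam : is_measure U (xyv n m) A lam.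
Hypothesis Hmu : is_measure U (xv n) (setT U) mu.
Hypothesis Hag : agree U (xv n) A (proj_x U n m lam) mu.

Lemma lam_eq_mu e : LF U (xv n) A e -> lam e = mu e.
Proof.
  intros He. rewrite <- (Hag e He). unfold proj_x.
  apply (measure_ext _ _ _ Hlam); auto using LF_x_xy, LF_and, LF_eq_self_y.
  intros v; simpl. pose proof (sat_eq_self (seq n m) v). tauto.
Qed.

Variables (phis psis : list F).
Hypothesis Hphis : forall p, In p phis -> LF U (xyv n m) A p.
Hypothesis Hpsis : forall p, In p psis -> LF U (xv n) (setT U) p.

Definition phi_atoms := atoms phis.
Definition base_atoms := atoms (map exists_y phi_atoms).
Definition psi_atoms := atoms psis.

Lemma LF_phi_atom a : In a phi_atoms -> LF U (xyv n m) A a.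
Proof. apply atoms_LF; auto. Qed.

Lemma LF_base_atom e : In e base_atoms -> LF U (xv n) A e.
Proof.
  apply atoms_LF. intros c [a [<- Ha]]%in_map_iff. apply LF_exists_y, LF_phi_atom, Ha.
Qed.

Lemma LF_psi_atom b : In b psi_atoms -> LF U (xv n) (setT U) b.
Proof. apply atoms_LF; auto. Qed.

(* [e] decides [exists_y a], and a witness of [exists_y a] may be chosen to agree
   with any given assignment on the x-variables, which are all that [e] and [b] see. *)
Lemma base_atom_amalgam e a b w1 w2 : In e base_atoms -> In a phi_atoms ->
  LF U (xv n) (setT U) b -> sat U w1 (fand e a) -> sat U w2 (fand e b) ->
  exists w, sat U w (fand (fand e a) b).
Proof.
  intros He Ha Hb [H1e H1a] [H2e H2b].
  destruct (atoms_decide _ e He (exists_y a) (in_map _ _ _ Ha)) as [Hd|Hd].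
  - destruct (sat_exists_y_elim a w2 (Hd w2 H2e)) as [w [Hw Hwa]].
    exists w. repeat split; auto.
    + apply (sat_x_agree A e w w2 (LF_base_atom e He) Hw). exact H2e.
    + apply (sat_x_agree (setT U) b w w2 Hb Hw). exact H2b.
  - exfalso. apply (Hd w1 H1e). apply sat_exists_y_intro. exact H1a.
Qed.

Lemma witness_or_null e a b : In e base_atoms -> In a phi_atoms -> In b psi_atoms ->
  sat U (witness (fand (fand e a) b)) (fand (fand e a) b) \/
  lam (fand e a) = 0 \/ mu (fand e b) = 0.
Proof.
  intros He Ha Hb. pose proof (LF_base_atom e He) as LFe.
  destruct (classic (exists w, sat U w (fand (fand e a) b))) as [Hsat|Hunsat].
  { left. apply sat_witness, Hsat. }
  right. destruct (classic (exists w, sat U w (fand e a))) as [[w1 H1]|H1].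
  - right. apply (measure_unsat _ _ _ Hmu); eauto using LF_and, LF_setT, LF_psi_atom.
    intros w2 H2. apply Hunsat. eapply base_atom_amalgam; eauto using LF_psi_atom.
  - left. apply (measure_unsat _ _ _ Hlam); eauto using LF_and, LF_x_xy, LF_phi_atom.
Qed.

Definition weight e a b := lam (fand e a) * mu (fand e b) * / mu e.

Definition finite_amalgam : list (R * (nat -> S)) :=
  flat_map (fun e => flat_map (fun a => map (fun b =>
    (weight e a b, witness (fand (fand e a) b))) psi_atoms) phi_atoms) base_atoms.

Lemma finite_amalgam_nonneg wv : In wv finite_amalgam -> 0 <= fst wv.
Proof.
  intros [e [He [a [Ha [b [<- Hb]]%in_map_iff]]%in_flat_map]]%in_flat_map. simpl.
  pose proof (LF_base_atom e He). pose proof (LF_phi_atom a Ha). pose proof (LF_psi_atom b Hb).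
  unfold weight. repeat apply Rmult_le_pos.
  - apply (measure_nonneg _ _ _ Hlam). auto using LF_and, LF_x_xy.
  - apply (measure_nonneg _ _ _ Hmu). eauto using LF_and, LF_setT.
  - apply Rinv_nonneg, (measure_nonneg _ _ _ Hmu). eauto using LF_setT.
Qed.

Lemma mixture_finite_amalgam p : mixture finite_amalgam p =
  sumR (map (fun e => sumR (map (fun a => sumR (map (fun b =>
    weight e a b * indicator p (witness (fand (fand e a) b))) psi_atoms)) phi_atoms)) base_atoms).
Proof.
  unfold mixture, finite_amalgam. rewrite sumR_flat_map. apply sumR_ext. intros e _.
  rewrite sumR_flat_map. apply sumR_ext. intros a _. rewrite map_map. reflexivity.
Qed.

Lemma weighted_indicator_phi e a b p : In e base_atoms -> In a phi_atoms -> In b psi_atoms ->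
  In p phis -> weight e a b * indicator p (witness (fand (fand e a) b)) =
  lam (fand (fand p e) a) * mu (fand e b) * / mu e.
Proof.
  intros He Ha Hb Hp. pose proof (LF_x_xy _ _ (LF_base_atom e He)) as LFe.
  pose proof (LF_phi_atom a Ha) as LFa. pose proof (Hphis p Hp) as LFp.
  unfold weight. destruct (witness_or_null e a b He Ha Hb) as [[[_ Hwa] _]|[H0|H0]].
  - destruct (atoms_decide phis a Ha p Hp) as [Hd|Hd].
    + rewrite indicator_1 by auto.
      rewrite (measure_ext _ _ _ Hlam (fand (fand p e) a) (fand e a)); auto using LF_and; [ring|].
      intros w; simpl. specialize (Hd w). tauto.
    + rewrite indicator_0 by auto.
      rewrite (measure_unsat _ _ _ Hlam (fand (fand p e) a)); auto using LF_and; [ring|].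
      intros w; simpl. specialize (Hd w). tauto.
  - assert (lam (fand (fand p e) a) <= lam (fand e a)).
    { apply (measure_mono _ _ _ Hlam); auto using LF_and. intros w; simpl; tauto. }
    assert (0 <= lam (fand (fand p e) a)) by (apply (measure_nonneg _ _ _ Hlam); auto using LF_and).
    replace (lam (fand (fand p e) a)) with 0 by lra. rewrite H0. ring.
  - rewrite H0. ring.
Qed.

Lemma weighted_indicator_psi e a b p : In e base_atoms -> In a phi_atoms -> In b psi_atoms ->
  In p psis -> weight e a b * indicator p (witness (fand (fand e a) b)) =
  lam (fand e a) * mu (fand (fand p e) b) * / mu e.
Proof.
  intros He Ha Hb Hp. pose proof (LF_setT _ _ _ (LF_base_atom e He)) as LFe.
  pose proof (LF_psi_atom b Hb) as LFb. pose proof (Hpsis p Hp) as LFp.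
  unfold weight. destruct (witness_or_null e a b He Ha Hb) as [[_ Hwb]|[H0|H0]].
  - destruct (atoms_decide psis b Hb p Hp) as [Hd|Hd].
    + rewrite indicator_1 by auto.
      rewrite (measure_ext _ _ _ Hmu (fand (fand p e) b) (fand e b)); auto using LF_and; [ring|].
      intros w; simpl. specialize (Hd w). tauto.
    + rewrite indicator_0 by auto.
      rewrite (measure_unsat _ _ _ Hmu (fand (fand p e) b)); auto using LF_and; [ring|].
      intros w; simpl. specialize (Hd w). tauto.
  - rewrite H0. ring.
  - assert (mu (fand (fand p e) b) <= mu (fand e b)).
    { apply (measure_mono _ _ _ Hmu); auto using LF_and. intros w; simpl; tauto. }
    assert (0 <= mu (fand (fand p e) b)) by (apply (measure_nonneg _ _ _ Hmu); auto using LF_and).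
    replace (mu (fand (fand p e) b)) with 0 by lra. rewrite H0. ring.
Qed.

Lemma finite_amalgam_phi p : In p phis -> mixture finite_amalgam p = lam p.
Proof.
  intros Hp. pose proof (Hphis p Hp) as LFp. rewrite mixture_finite_amalgam.
  unfold base_atoms, phi_atoms, psi_atoms.
  transitivity (sumR (map (fun e => sumR (map (fun a => lam (fand (fand p e) a)) (atoms phis)))
    (atoms (map exists_y (atoms phis))))).
  - apply sumR_ext; intros e He; apply sumR_ext; intros a Ha.
    pose proof (LF_base_atom e He) as LFe. pose proof (LF_phi_atom a Ha) as LFa.
    rewrite (sumR_ext _ (fun b => lam (fand (fand p e) a) * / mu e * mu (fand e b)))
      by (intros b Hb; rewrite weighted_indicator_phi; auto; ring).
    rewrite sumR_scal_l, <- (measure_atoms _ _ _ Hmu psis Hpsis e (LF_setT _ _ _ LFe)).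
    apply Rinv_cancel_dominated.
    + apply (measure_nonneg _ _ _ Hlam). auto using LF_and, LF_x_xy.
    + rewrite <- (lam_eq_mu e LFe). apply (measure_mono _ _ _ Hlam); auto using LF_and, LF_x_xy.
      intros w; simpl; tauto.
  - rewrite (measure_atoms _ _ _ Hlam (map exists_y (atoms phis))) with (th := p); auto.
    + apply sumR_ext; intros e He. symmetry.
      apply (measure_atoms _ _ _ Hlam phis Hphis). auto using LF_and, LF_x_xy, LF_base_atom.
    + intros c [a [<- Ha]]%in_map_iff. apply LF_x_xy, LF_exists_y, LF_phi_atom, Ha.
Qed.

Lemma finite_amalgam_psi p : In p psis -> mixture finite_amalgam p = mu p.
Proof.
  intros Hp. pose proof (Hpsis p Hp) as LFp. rewrite mixture_finite_amalgam.
  unfold base_atoms, phi_atoms, psi_atoms.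
  rewrite (measure_atoms _ _ _ Hmu (map exists_y (atoms phis))) with (th := p); auto.
  - apply sumR_ext; intros e He. pose proof (LF_base_atom e He) as LFe.
    transitivity (sumR (map (fun a => lam (fand e a) * (/ mu e * mu (fand p e))) (atoms phis))).
    + apply sumR_ext; intros a Ha.
      rewrite (sumR_ext _ (fun b => lam (fand e a) * / mu e * mu (fand (fand p e) b)))
        by (intros b Hb; rewrite weighted_indicator_psi; auto; ring).
      rewrite sumR_scal_l, <- (measure_atoms _ _ _ Hmu psis Hpsis); eauto using LF_and, LF_setT.
      ring.
    + rewrite sumR_scal_r, <- (measure_atoms _ _ _ Hlam phis Hphis e (LF_x_xy _ _ LFe)).
      rewrite (lam_eq_mu e LFe).
      replace (mu e * (/ mu e * mu (fand p e))) with (mu (fand p e) * / mu e * mu e) by ring.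
      apply Rinv_cancel_dominated.
      * apply (measure_nonneg _ _ _ Hmu). eauto using LF_and, LF_setT.
      * apply (measure_mono _ _ _ Hmu); eauto using LF_and, LF_setT. intros w; simpl; tauto.
  - intros c [a [<- Ha]]%in_map_iff. apply (LF_setT _ A), LF_exists_y, LF_phi_atom, Ha.
Qed.
End FiniteAmalgam.

Lemma is_measure_cluster_point {I : Type} (Ds : I -> list (R * (nat -> S)))
    (good : F -> I -> Prop) (om : F -> R) (V : nat -> bool) :
  (forall i wv, In wv (Ds i) -> 0 <= fst wv) -> (forall i, mixture (Ds i) (ftop U) = 1) ->
  cluster_point (fun i => mixture (Ds i)) good om -> is_measure U V (setT U) om.
Proof.
  intros HDs Htop Hom. repeat split.
  - intros p q _ _ Hpq. apply (cluster_point_ext _ _ _ _ _ Hom). intros i. apply mixture_ext, Hpq.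
  - intros p _. apply (cluster_point_nonneg _ _ _ _ _ Hom). intros i. apply mixture_nonneg, HDs.
  - apply (cluster_point_eventually _ _ _ _ _ Hom (ftop U) []). intros i _. apply Htop.
  - intros p q _ _ Hpq. apply (cluster_point_add _ _ _ _ _ Hom). intros i.
    apply mixture_add. intros v Hv. apply (Hpq v), Hv.
Qed.

Lemma measure_amalgamation (A : S -> Prop) (lam mu : F -> R) :
  is_measure U (xyv n m) A lam -> is_measure U (xv n) (setT U) mu ->
  agree U (xv n) A (proj_x U n m lam) mu ->
  exists om, is_measure U (xyv n m) (setT U) om /\ agree U (xyv n m) A om lam /\
    agree U (xv n) (setT U) (proj_x U n m om) mu.
Proof.
  intros Hlam Hmu Hag.
  set (phis := fun l : list F => ftop U :: filter_prop (LF U (xyv n m) A) l).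
  set (psis := fun l : list F => filter_prop (LF U (xv n) (setT U)) l).
  assert (Hphis : forall l p, In p (phis l) -> LF U (xyv n m) A p).
  { intros l p [<-|[_ Hp]%in_filter_prop]; [apply LF_top|exact Hp]. }
  assert (Hpsis : forall l p, In p (psis l) -> LF U (xv n) (setT U) p).
  { intros l p [_ Hp]%in_filter_prop. exact Hp. }
  set (approx := fun l => finite_amalgam lam mu (phis l) (psis l)).
  assert (approx_nonneg : forall l wv, In wv (approx l) -> 0 <= fst wv).
  { intros l. eapply finite_amalgam_nonneg; eauto. }
  assert (approx_phi : forall l p, In p (phis l) -> mixture (approx l) p = lam p).
  { intros l p Hp. eapply finite_amalgam_phi; eauto. }
  assert (approx_psi : forall l p, In p (psis l) -> mixture (approx l) p = mu p).
  { intros l p Hp. eapply finite_amalgam_psi; eauto. }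
  assert (approx_top : forall l, mixture (approx l) (ftop U) = 1).
  { intros l. rewrite approx_phi by (left; reflexivity). apply (measure_top _ _ _ Hlam). }
  destruct (CompactUnitCube.cluster_point_exists (fun l => mixture (approx l)) (@In F))
    as [om Hom].
  { intros l p. rewrite <- (approx_top l).
    split; [apply (mixture_nonneg _ (approx_nonneg l)) |
            apply (mixture_le_top _ (approx_nonneg l))]. }
  { intros l. exists l. auto. }
  exists om. split; [|split].
  - exact (is_measure_cluster_point approx _ om _ approx_nonneg approx_top Hom).
  - intros p Hp. apply (cluster_point_eventually _ _ _ _ _ Hom p [p]). intros l Hl.
    apply approx_phi. right. apply in_filter_prop. split; [apply Hl; left|]; auto.
  - intros p Hp. apply (cluster_point_eventually _ _ _ _ _ Hom _ [p]). intros l Hl.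
    rewrite <- (approx_psi l p) by (apply in_filter_prop; split; [apply Hl; left|]; auto).
    apply mixture_ext. intros v. simpl. pose proof (sat_eq_self (seq n m) v). tauto.
Qed.
End Formulas.

Theorem lemma3p8 (L : signature) (U : structure L) (K : Type) (n m : nat)
  (A B : dom U -> Prop) (mu nu : form L (dom U) -> R) :
  monster U K -> small U K A -> small U K B -> (forall a, A a -> B a) ->
  is_measure U (xv n) (setT U) mu -> is_measure U (yv n m) (setT U) nu ->
  geE U n m A mu nu -> geE U n m B mu nu.
Proof.
  intros _ _ _ HAB Hmu _ [lam [Hlam [Hlam_x Hlam_nu]]].
  destruct (measure_amalgamation L U n m A lam mu Hlam Hmu Hlam_x)
    as [om0 [Hom0 [Hom0_lam Hom0_x]]].
  exists om0. split; [|split].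
  - apply is_measure_restrict, Hom0.
  - intros p Hp. apply Hom0_x. eapply LF_setT; eauto.
  - intros om Hom Hom_om0 Hom_x. apply Hlam_nu; auto.
    intros p Hp. rewrite Hom_om0 by (eapply LF_mono; [| |exact Hp]; auto). apply Hom0_lam, Hp.
Qed.
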